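(* Let $\Gamma$ be a weighted digraph with vertex set $\{1,\dots,n\}$, $n>1$, without loops and with strictly positive arc weights, with Laplacian matrix $L$, matrices of in-forests $Q_k$ and in-forest weights $\sigma_k$. For every $m=0,1,2,\dots$, $$(-L)^m=\sum_{k=0}^{m}\alpha_kQ_{m-k},$$ where $\alpha_0=1$ and, for $k\ge1$, $$\alpha_k=\sum_{(p_1,\dots,p_k):\ \sum_{i=1}^k ip_i=k}(-1)^{\sum_{i=1}^k p_i}\frac{\big(\sum_{i=1}^k p_i\big)!}{\prod_{i=1}^k p_i!}\prod_{i=1}^k\sigma_i^{p_i},$$ the outer sum ranging over all $k$-tuples of nonnegative integers $(p_1,\dots,p_k)$ with $\sum_{i=1}^k ip_i=k$.
   Context: $W=(w_{ij})$ is the matrix of arc weights ($w_{ij}>0$ iff there is an arc $i\to j$, else $0$). The Laplacian $L=(\ell_{ij})$: $\ell_{ij}=-w_{ij}$ for $j\ne i$, $\ell_{ii}=\sum_{k\ne i}w_{ik}$. The weight of a subgraph is the product of its arc weights (1 if no arcs); the weight of a set of subgraphs is the sum of their weights (0 for the empty set). A converging tree is a weakly connected digraph with one vertex (the root) of outdegree 0 and all others of outdegree 1; an in-forest is a spanning subgraph of $\Gamma$ whose weak components are converging trees. $\sigma_k$ is the total weight of in-forests of $\Gamma$ with $k$ arcs ($\sigma_0=1$). $Q_k=(q^k_{ij})$ where $q^k_{ij}$ is the total weight of in-forests with $k$ arcs in which $i$ lies in a tree rooted at $j$ ($Q_0=I$). *)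

From HB Require Import structures.
From mathcomp Require Import all_boot all_order all_algebra.
Set Implicit Arguments. Unset Strict Implicit. Unset Printing Implicit Defensive.
Import Order.TTheory GRing.Theory Num.Theory.
Local Open Scope ring_scope.

Section Forests.
Variables (R : realFieldType) (n : nat) (W : 'M[R]_n).

Definition arcs : {set 'I_n * 'I_n} := [set a | 0 < W a.1 a.2].

Definition laplacian : 'M[R]_n :=
  \matrix_(i, j) if i == j then \sum_(k | k != i) W i k else - W i j.

(* a subgraph (spanning) is given by its arc set F *)
Definition outdeg (F : {set 'I_n * 'I_n}) (i : 'I_n) : nat :=
  #|[set j | (i, j) \in F]|.

Definition weak_adj (F : {set 'I_n * 'I_n}) : rel 'I_n :=
  fun x y => ((x, y) \in F) || ((y, x) \in F).

Definition wcomp (F : {set 'I_n * 'I_n}) (x : 'I_n) : {set 'I_n} :=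
  [set y | connect (weak_adj F) x y].

(* the weak component C is a converging tree: exactly one root of outdegree 0,
   all other vertices of outdegree 1 (C is weakly connected by construction,
   and every arc of F touching C lies inside C) *)
Definition converging_tree_comp (F : {set 'I_n * 'I_n}) (C : {set 'I_n}) : bool :=
  [exists r in C, (outdeg F r == 0)%N &&
     [forall v in C, (v != r) ==> (outdeg F v == 1)%N]].

Definition in_forest (F : {set 'I_n * 'I_n}) : bool :=
  (F \subset arcs) && [forall x, converging_tree_comp F (wcomp F x)].

Definition sweight (F : {set 'I_n * 'I_n}) : R := \prod_(a in F) W a.1 a.2.

Definition sigma (k : nat) : R :=
  \sum_(F : {set 'I_n * 'I_n} | in_forest F && (#|F| == k)) sweight F.

Definition rooted_at (F : {set 'I_n * 'I_n}) (i j : 'I_n) : bool :=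
  (j \in wcomp F i) && (outdeg F j == 0)%N.

Definition Qmx (k : nat) : 'M[R]_n :=
  \matrix_(i, j) \sum_(F : {set 'I_n * 'I_n} |
                      [&& in_forest F, #|F| == k & rooted_at F i j]) sweight F.

(* alpha_k : p : 'I_k -> 'I_k.+1 encodes (p_1,...,p_k) with p_{i+1} = p i;
   every nonneg solution of sum i p_i = k has p_i <= k *)
Definition alpha (k : nat) : R :=
  if k == 0%N then 1 else
  \sum_(p : {ffun 'I_k -> 'I_k.+1} | (\sum_(i < k) i.+1 * p i)%N == k)
    (-1) ^+ (\sum_(i < k) p i)%N
    * ((\sum_(i < k) p i)`!)%:R / (\prod_(i < k) (p i)`!)%:R
    * \prod_(i < k) sigma i.+1 ^+ p i.

End Forests.

Definition mxpow (R : realFieldType) (n : nat) (A : 'M[R]_n) (m : nat) : 'M[R]_n :=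
  iter m (mulmx A) 1%:M.

From HB Require Import structures.
From mathcomp Require Import all_boot all_order all_algebra.
From mathcomp Require Import ring zify.
Set Implicit Arguments. Unset Strict Implicit. Unset Printing Implicit Defensive.
Import Order.TTheory GRing.Theory Num.Theory.
Local Open Scope ring_scope.

(* Deleting the arc leaving a non-root vertex [i] of an in-forest [G] gives an
   in-forest [H] in which [i] is a root and the head [l] of the arc lies outside
   the tree of [i]; conversely each such pair [(H, i -> l)] comes from exactly one
   [G], whose trees are those of [H] with the tree of [i] grafted below [l].
   Summing over these pairs gives [Q_(k+1) = sigma_(k+1) I - L Q_k]: in [-L Q_k]
   the forests in which [i] is not a root contribute a double sum of the
   antisymmetric form [sum_(l0, l) c l0 * c l * (rho l - rho l0)], which vanishes.
   On the scalar side, splitting each multinomial coefficient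
   [(sum p)! / prod (p t)!] according to which part is removed shows
   [alpha_(m+1) = - sum_(i <= m) sigma_(i+1) alpha_(m-i)], i.e. [sum alpha_k t^k]
   is the inverse of [sum sigma_k t^k]. *)

Lemma connect_neq_step (T : finType) (e : rel T) x z :
  connect e x z -> x != z -> exists2 y, e x y & connect e y z.
Proof.
move=> /connectP [[|y p] /= xpz ->]; first by rewrite eqxx.
by case/andP: xpz => xy pz _; exists y => //; apply/connectP; exists p.
Qed.

Section InForests.
Variables (R : realFieldType) (n : nat) (W : 'M[R]_n).
Implicit Types (F G H : {set 'I_n * 'I_n}) (x y z i j l : 'I_n).

Definition arc_rel F : rel 'I_n := fun x y => (x, y) \in F.
Definition functional F := forall x, (outdeg F x <= 1)%N.
Definition reaches_root F x z := connect (arc_rel F) x z && (outdeg F z == 0)%N.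

Lemma outdeg0P F x : reflect (forall y, (x, y) \notin F) (outdeg F x == 0)%N.
Proof.
rewrite /outdeg cards_eq0; apply: (iffP eqP) => [F0 y|noF].
  by apply/negP => xy; have := in_set0 y; rewrite -F0 inE xy.
by apply/setP => y; rewrite !inE (negbTE (noF y)).
Qed.

Lemma functional_uniq F x a b : functional F -> (x, a) \in F -> (x, b) \in F -> a = b.
Proof.
move=> /(_ x) /card_le1P le1 xa xb.
by have := le1 a; rewrite !inE => /(_ xa) /(_ b); rewrite !inE xb => /esym /eqP.
Qed.

Lemma connect_root F z y : (outdeg F z == 0)%N -> connect (arc_rel F) z y -> y = z.
Proof.
move=> /outdeg0P z0 zy; apply/eqP; rewrite eq_sym; apply: contraT.
by case/(connect_neq_step zy) => w zw _; have := z0 w; rewrite [_ \in _]zw.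
Qed.

Lemma reaches_root_refl F x : (outdeg F x == 0)%N -> reaches_root F x x.
Proof. by move=> x0; rewrite /reaches_root connect0. Qed.

Lemma reaches_root_step F x y z : functional F -> (x, y) \in F ->
  reaches_root F x z = reaches_root F y z.
Proof.
move=> fF xy; apply/idP/idP => /andP [conn z0]; rewrite /reaches_root z0 andbT.
  have [xz|] := eqVneq x z; first by move/outdeg0P: z0 => /(_ y); rewrite -xz xy.
  by case/(connect_neq_step conn) => y' xy'; rewrite (functional_uniq fF xy' xy).
exact: connect_trans (connect1 xy) conn.
Qed.

Lemma connect_arc_weak F x y : connect (arc_rel F) x y -> connect (weak_adj F) x y.
Proof. by apply: connect_sub => a b ab; apply: connect1; rewrite /weak_adj [_ \in _]ab. Qed.

Lemma reaches_root_weak F x y z : functional F -> connect (weak_adj F) x y ->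
  reaches_root F x z = reaches_root F y z.
Proof.
move=> fF /connectP [p + ->]; elim: p x => [|y' p IH] x //= /andP [xy' p_path].
rewrite -IH //; case/orP: xy' => arc; first exact: reaches_root_step.
by rewrite (reaches_root_step _ fF arc).
Qed.

Lemma reaches_rootE F x z j : functional F -> reaches_root F x z ->
  reaches_root F x j = (j == z).
Proof.
move=> fF xz; apply/idP/eqP => [xj|->//].
have /andP [xz_conn z0] := xz.
have /andP [zj _] : reaches_root F z j.
  by rewrite -(reaches_root_weak _ fF (connect_arc_weak xz_conn)).
exact: connect_root z0 zj.
Qed.

Lemma forestP F :
  reflect [/\ F \subset arcs W, functional F & forall x, exists z, reaches_root F x z]
          (in_forest W F).
Proof.
apply: (iffP andP) => [[Farcs /forallP trees]|[Farcs fF roots]].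
  have fF : functional F.
    move=> x; have /existsP [r /and3P [_ r0 /forallP others]] := trees x.
    have [->|xr] := eqVneq x r; first by rewrite (eqP r0).
    by move: (others x); rewrite inE connect0 xr => /eqP ->.
  split=> // x; have /existsP [r /and3P [xr r0 _]] := trees x.
  by exists r; rewrite inE in xr; rewrite (reaches_root_weak _ fF xr) reaches_root_refl.
split=> //; apply/forallP => x; have [z xz] := roots x.
apply/existsP; exists z; have /andP [xz_conn z0] := xz; apply/and3P; split=> //.
  by rewrite inE connect_arc_weak.
apply/forallP => v; apply/implyP; rewrite inE => xv; apply/implyP => vz.
have := fF v; rewrite leq_eqVlt ltnS leqn0; case/orP => // v0.
have := reaches_root_refl v0; rewrite -(reaches_root_weak _ fF xv).
by rewrite (reaches_rootE _ fF xz) (negbTE vz).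
Qed.

Lemma forest_functional F : in_forest W F -> functional F.
Proof. by case/forestP. Qed.

Lemma wcomp_root H i x : functional H -> (outdeg H i == 0)%N ->
  (x \in wcomp H i) = reaches_root H x i.
Proof.
move=> fH i0; rewrite inE; apply/idP/idP => [ix|/andP [xi _]].
  by rewrite -(reaches_root_weak _ fH ix) reaches_root_refl.
by rewrite (sym_connect_sym (fun a b => orbC _ _)) connect_arc_weak.
Qed.

Lemma rooted_atE F i j : in_forest W F -> rooted_at F i j = reaches_root F i j.
Proof.
move=> /forest_functional fF; apply/andP/idP => [[ij j0]|/andP [ij j0]].
  by rewrite inE in ij; rewrite (reaches_root_weak _ fF ij) reaches_root_refl.
by rewrite inE connect_arc_weak.
Qed.

Lemma rooted_at_root F i j : in_forest W F -> (outdeg F i == 0)%N ->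
  rooted_at F i j = (i == j).
Proof.
move=> forF i0; rewrite (rooted_atE _ _ forF) eq_sym.
by rewrite (reaches_rootE _ (forest_functional forF) (reaches_root_refl i0)).
Qed.

Lemma rooted_at_wcomp F i l j : in_forest W F -> l \in wcomp F i ->
  rooted_at F l j = rooted_at F i j.
Proof.
move=> forF; rewrite inE => il; rewrite !(rooted_atE _ _ forF).
by rewrite (reaches_root_weak _ (forest_functional forF) il).
Qed.

Lemma outdeg_sub F1 F2 x : F1 \subset F2 -> (outdeg F1 x <= outdeg F2 x)%N.
Proof.
by move=> /subsetP sub; apply/subset_leq_card/subsetP => y; rewrite !inE => /sub.
Qed.

Lemma connect_arc_sub F1 F2 x y : F1 \subset F2 ->
  connect (arc_rel F1) x y -> connect (arc_rel F2) x y.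
Proof. by move=> /subsetP sub; apply: connect_sub => a b /sub; apply: connect1. Qed.

Lemma outdegU1 H i l x : x != i -> outdeg ((i, l) |: H) x = outdeg H x.
Proof. by move=> xi; apply: eq_card => y; rewrite !inE xpair_eqE (negbTE xi). Qed.

Lemma connect_cycle_back F i l z : functional F -> (i, l) \in F ->
  connect (arc_rel F) l i -> connect (arc_rel F) i z -> connect (arc_rel F) z i.
Proof.
move=> fF il li /connectP [p + ->].
suff back v : connect (arc_rel F) v i -> path (arc_rel F) v p ->
  connect (arc_rel F) (last v p) i by apply: back.
elim: p v => [|y p IH] v //= vi /andP [vy py]; apply: IH py.
have [ei|vi'] := eqVneq v i; first by move: vy; rewrite ei => /(functional_uniq fF il) <-.
by have [y' vy' y'i] := connect_neq_step vi vi'; rewrite -(functional_uniq fF vy' vy).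
Qed.

Lemma forest_remove G i l : in_forest W G -> (i, l) \in G ->
  [/\ in_forest W (G :\ (i, l)), (outdeg (G :\ (i, l)) i == 0)%N
    & l \notin wcomp (G :\ (i, l)) i].
Proof.
move=> /forestP [Garcs fG roots] il; set H := G :\ (i, l).
have HG : H \subset G by apply: subD1set.
have fH : functional H by move=> x; apply: leq_trans (fG x); apply: outdeg_sub.
have i0 : (outdeg H i == 0)%N.
  apply/outdeg0P => y; rewrite !inE xpair_eqE eqxx /=.
  by apply/negP => /andP [+ iy]; rewrite (functional_uniq fG iy il) eqxx.
have rootsH x : exists z, reaches_root H x z.
  have [z /andP [/connectP [p + ->]]] := roots x.
  elim: p x => [|y p IH] x /= => [_ x0|/andP [xy py] z0].
    by exists x; rewrite reaches_root_refl // -leqn0 (leq_trans (outdeg_sub x HG)) ?leqn0.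
  have [->|xi] := eqVneq x i; first by exists i; apply: reaches_root_refl.
  have [z' /andP [yz' z'0]] := IH y py z0; exists z'; rewrite /reaches_root z'0 andbT.
  by apply: connect_trans yz'; apply: connect1; rewrite /arc_rel !inE xpair_eqE (negbTE xi).
split=> //; first by apply/forestP; split=> //; apply: subset_trans Garcs.
rewrite (wcomp_root _ fH i0); apply/negP => /andP [li _].
have [z /andP [iz z0]] := roots i.
have zi := connect_cycle_back fG il (connect_arc_sub HG li) iz.
by have := outdeg0P _ _ z0 l; rewrite -(connect_root z0 zi) il.
Qed.

Lemma outdeg_set0 x : (outdeg set0 x == 0)%N.
Proof. by apply/outdeg0P => y; rewrite inE. Qed.

Lemma forest0 : in_forest W set0.
Proof.
apply/forestP; split=> [|x|x]; first exact: sub0set.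
  by rewrite (eqP (outdeg_set0 x)).
by exists x; apply/reaches_root_refl/outdeg_set0.
Qed.

Lemma functionalU1 H i l : functional H -> (outdeg H i == 0)%N ->
  functional ((i, l) |: H).
Proof.
move=> fH i0 x; have [->|xi] := eqVneq x i; last by rewrite outdegU1.
apply/card_le1P => a; rewrite !inE xpair_eqE eqxx /=.
move/outdeg0P: i0 => i0; rewrite (negbTE (i0 a)) orbF => /eqP -> b.
by rewrite !inE xpair_eqE eqxx /= (negbTE (i0 b)) orbF.
Qed.

Lemma forest_add H i l : in_forest W H -> (outdeg H i == 0)%N ->
  (i, l) \in arcs W -> l \notin wcomp H i ->
  in_forest W ((i, l) |: H) /\ (forall x j, rooted_at ((i, l) |: H) x j =
     if x \in wcomp H i then rooted_at H l j else rooted_at H x j).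
Proof.
move=> forH i0 il_arc l_out; have /forestP [Harcs fH roots] := forH.
set G := (i, l) |: H; have HG : H \subset G by apply: subsetUr.
have fG : functional G by apply: functionalU1.
have keep_root x z : reaches_root H x z -> z != i -> reaches_root G x z.
  by move=> /andP [xz z0] zi; rewrite /reaches_root (connect_arc_sub HG xz) outdegU1.
have [zl lzl] := roots l.
have zli : zl != i by apply: contraNneq l_out => zi; rewrite (wcomp_root _ fH i0) -zi.
have reroot x : reaches_root H x i -> reaches_root G x zl.
  move=> /andP [xi _]; have /andP [lz zl0] := keep_root _ _ lzl zli.
  rewrite /reaches_root zl0 andbT (connect_trans (connect_arc_sub HG xi)) //.
  by apply: connect_trans lz; apply: connect1; rewrite /arc_rel setU11.
have forG : in_forest W G.
  apply/forestP; split=> [|//|x]; first by rewrite subUset sub1set il_arc Harcs.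
  have [z xz] := roots x; have [ezi|zi] := eqVneq z i.
    by exists zl; apply: reroot; rewrite -ezi.
  by exists z; apply: keep_root.
split=> // x j; rewrite (rooted_atE _ _ forG) !(rooted_atE _ _ forH) (wcomp_root _ fH i0).
case: ifP => [xi|xi].
  by rewrite (reaches_rootE _ fG (reroot _ xi)) (reaches_rootE _ fH lzl).
have [z xz] := roots x; have zi : z != i by apply: contraFneq xi => <-.
by rewrite (reaches_rootE _ fG (keep_root _ _ xz zi)) (reaches_rootE _ fH xz).
Qed.

End InForests.

Lemma sum_antisym (R : comPzRingType) (I : finType) (c g : I -> R) :
  \sum_a c a * \sum_b c b * (g b - g a) = 0.
Proof.
have expand a b : c a * (c b * (g b - g a)) = c a * c b * g b - c b * c a * g a.
  by ring.
under eq_bigr do rewrite mulr_sumr; under eq_bigr do under eq_bigr do rewrite expand.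
by under eq_bigr do rewrite sumrB; rewrite sumrB [X in _ - X]exchange_big subrr.
Qed.

Section ForestSums.
Variables (R : realFieldType) (n : nat) (W : 'M[R]_n).
Hypothesis W_ge0 : forall i j, 0 <= W i j.
Implicit Types (F G H : {set 'I_n * 'I_n}) (i j l x : 'I_n).

Definition kforest k : pred {set 'I_n * 'I_n} := fun F => in_forest W F && (#|F| == k)%N.

Definition attachable k i l : pred {set 'I_n * 'I_n} := fun H =>
  [&& kforest k H, outdeg H i == 0%N, (i, l) \in arcs W & l \notin wcomp H i].

Definition attach_weight i H l : R := W i l * (l \notin wcomp H i)%:R.

Local Notation rho F x j := ((rooted_at F x j)%:R : R).

Lemma W_notin_arcs i l : (i, l) \notin arcs W -> W i l = 0.
Proof.
by rewrite inE /= => /negbTE W_le0; apply/eqP; rewrite eq_le W_ge0 leNgt W_le0.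
Qed.

Lemma attach_weight_neq0 k i l H : kforest k H -> (outdeg H i == 0)%N ->
  attach_weight i H l != 0 -> attachable k i l H.
Proof.
move=> kH i0; rewrite /attach_weight mulf_eq0 negb_or pnatr_eq0 eqb0 negbK.
case/andP=> Wil l_out; apply/and4P; split=> //.
by apply: contraR Wil => /W_notin_arcs ->.
Qed.

Lemma eq_attach_weight k i l H (y y' : R) : kforest k H -> (outdeg H i == 0)%N ->
  (attachable k i l H -> y = y') -> attach_weight i H l * y = attach_weight i H l * y'.
Proof.
move=> kH i0 yy'; have [->|] := eqVneq (attach_weight i H l) 0; first by rewrite !mul0r.
by move/(attach_weight_neq0 kH i0)/yy' ->.
Qed.

Lemma sweightU1 H i l : (i, l) \notin H ->
  sweight W ((i, l) |: H) = W i l * sweight W H.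
Proof. by move=> il; rewrite /sweight big_setU1. Qed.

Lemma sum_kforest_arc (X : {set 'I_n * 'I_n} -> R) k i l :
  \sum_(G | kforest k.+1 G && ((i, l) \in G)) X G
  = \sum_(H | attachable k i l H) X ((i, l) |: H).
Proof.
rewrite (reindex_onto (fun H => (i, l) |: H) (fun G => G :\ (i, l))) /=; last first.
  by move=> G /andP [_ il]; apply: setD1K.
apply: eq_bigl => H; apply/idP/idP.
  case/andP=> /andP [/andP [forG cardG] _] /eqP HE.
  have [forH i0 l_out] := forest_remove forG (setU11 (i, l) H); rewrite HE in forH i0 l_out.
  have il : (i, l) \notin H by move/outdeg0P: i0.
  move: cardG; rewrite cardsU1 il add1n eqSS => cardH.
  apply/and4P; split=> //; first exact/andP.
  by case/forestP: forG => /subsetP Garcs _ _; apply/Garcs/setU11.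
case/and4P=> /andP [forH cardH] i0 il_arc l_out.
have [forG _] := forest_add forH i0 il_arc l_out.
have il : (i, l) \notin H by move/outdeg0P: i0.
by rewrite /kforest forG cardsU1 il (eqP cardH) setU11 setU1K ?eqxx.
Qed.

Lemma sum_kforest_outarc (X : {set 'I_n * 'I_n} -> R) k i :
  \sum_(G | kforest k.+1 G && (outdeg G i != 0)%N) X G
  = \sum_l \sum_(H | attachable k i l H) X ((i, l) |: H).
Proof.
under [RHS]eq_bigr do rewrite -sum_kforest_arc.
rewrite (exchange_big_dep (kforest k.+1)) /=; last by move=> l G _ /andP [].
rewrite big_mkcondr; apply: eq_bigr => G kG; have /andP [forG _] := kG.
rewrite (eq_bigl (fun l => l \in [set l | (i, l) \in G])) => [|l]; last by rewrite inE kG.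
rewrite sumr_const -/(outdeg G i).
by have := forest_functional forG i; case: (outdeg G i) => [|[|]].
Qed.

Lemma sum_kforest_nonroot (X : {set 'I_n * 'I_n} -> R) k i :
  \sum_(G | kforest k.+1 G && (outdeg G i != 0)%N) sweight W G * X G
  = \sum_(H | kforest k H && (outdeg H i == 0)%N)
      sweight W H * \sum_l attach_weight i H l * X ((i, l) |: H).
Proof.
rewrite sum_kforest_outarc; under [RHS]eq_bigr do rewrite mulr_sumr.
rewrite [RHS]exchange_big /=; apply: eq_bigr => l _.
rewrite [RHS](bigID (fun H => ((i, l) \in arcs W) && (l \notin wcomp H i))) /=.
rewrite [X in _ = _ + X]big1 ?addr0 => [|H /andP [_]]; last first.
  rewrite negb_and negbK /attach_weight => /orP [/W_notin_arcs -> | ->] /=;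
  by rewrite !(mulr0, mul0r).
apply: eq_big => [H|H /and4P [_ i0 _ l_out]]; first by rewrite /attachable -!andbA.
have il : (i, l) \notin H by move/outdeg0P: i0.
by rewrite sweightU1 // /attach_weight l_out mulr1 mulrA [W i l * _]mulrC.
Qed.

Lemma rooted_at_attach k i l H x j : attachable k i l H ->
  rooted_at ((i, l) |: H) x j
  = if x \in wcomp H i then rooted_at H l j else rooted_at H x j.
Proof.
case/and4P=> /andP [forH _] i0 il_arc l_out.
by have [_ ->] := forest_add forH i0 il_arc l_out; case: ifP.
Qed.

Lemma sum_kforest_succ_rho k i j :
  \sum_(G | kforest k.+1 G) sweight W G * (rho G i j - (i == j)%:R)
  = \sum_(H | kforest k H && (outdeg H i == 0)%N)
      sweight W H * \sum_l attach_weight i H l * (rho H l j - (i == j)%:R).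
Proof.
rewrite (bigID (fun G => outdeg G i != 0)%N) /= [X in _ + X]big1 ?addr0.
  rewrite sum_kforest_nonroot; apply: eq_bigr => H /andP [kH i0].
  congr (_ * _); apply: eq_bigr => l _; apply: (eq_attach_weight kH i0) => att.
  by rewrite (rooted_at_attach _ _ att) inE connect0.
move=> G /andP [/andP [forG _]]; rewrite negbK => i0.
by rewrite (rooted_at_root j forG i0) subrr mulr0.
Qed.

Lemma sum_W_rho_root F i j : in_forest W F -> (outdeg F i == 0)%N ->
  \sum_l W i l * (rho F l j - rho F i j)
  = \sum_l attach_weight i F l * (rho F l j - (i == j)%:R).
Proof.
move=> forF i0; rewrite (rooted_at_root j forF i0).
apply: eq_bigr => l _; rewrite /attach_weight.
have [l_in|_] := boolP (l \in wcomp F i); last by rewrite mulr1.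
by rewrite (rooted_at_wcomp _ forF l_in) (rooted_at_root j forF i0) subrr !mulr0.
Qed.

Lemma sum_kforest_W_rho_nonroot k i j :
  \sum_(F | kforest k F && (outdeg F i != 0)%N)
    sweight W F * \sum_l W i l * (rho F l j - rho F i j) = 0.
Proof.
case: k => [|k].
  apply: big1 => F /andP [/andP [_]]; rewrite cards_eq0 => /eqP ->.
  by rewrite outdeg_set0.
rewrite sum_kforest_nonroot big1 // => H /andP [kH i0].
rewrite -[RHS](mulr0 (sweight W H)).
rewrite -[in RHS](sum_antisym (attach_weight i H) (fun l => rho H l j)).
congr (_ * _); apply: eq_bigr => l0 _; apply: (eq_attach_weight kH i0) => att.
rewrite (rooted_at_attach _ _ att) inE connect0; apply: eq_bigr => l _.
rewrite (rooted_at_attach _ _ att) /attach_weight.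
by case: ifP => _; rewrite ?subrr ?mulr0 ?mul0r ?mulr1.
Qed.

Lemma kforest_recurrence k i j :
  \sum_(G | kforest k.+1 G) sweight W G * (rho G i j - (i == j)%:R)
  = \sum_(F | kforest k F) sweight W F * \sum_l W i l * (rho F l j - rho F i j).
Proof.
rewrite sum_kforest_succ_rho [RHS](bigID (fun F => outdeg F i == 0)%N) /=.
rewrite sum_kforest_W_rho_nonroot addr0; apply: eq_bigr => F /andP [/andP [forF _] i0].
by rewrite sum_W_rho_root.
Qed.

End ForestSums.


Section PartitionSums.
Variables (R : numFieldType) (s : nat -> R).

Section BoundedParts.
Variable N : nat.
Implicit Types (p q : {ffun 'I_N -> 'I_N.+1}) (i t : 'I_N).

Definition partitions m : pred {ffun 'I_N -> 'I_N.+1} :=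
  fun p => (\sum_(t < N) t.+1 * p t)%N == m.

Definition nparts p : nat := \sum_(t < N) p t.

Definition alpha_term p : R :=
  (-1) ^+ nparts p * ((nparts p)`!)%:R / (\prod_(t < N) (p t)`!)%:R
  * \prod_(t < N) s t.+1 ^+ p t.

Definition alpha_sum m : R := \sum_(p | partitions m p) alpha_term p.

Definition add_part i q : {ffun 'I_N -> 'I_N.+1} := [ffun t => inord (q t + (t == i))].
Definition remove_part i p : {ffun 'I_N -> 'I_N.+1} := [ffun t => inord (p t - (t == i))].

Lemma remove_partE i p t : remove_part i p t = (p t - (t == i))%N :> nat.
Proof. by rewrite ffunE inordK // ltnS (leq_trans (leq_subr _ _)) // -ltnS. Qed.

Lemma add_partE i q t : (q i < N)%N -> add_part i q t = (q t + (t == i))%N :> nat.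
Proof.
move=> qi; rewrite ffunE inordK //; have [->|_] := eqVneq t i; last by rewrite addn0.
by rewrite addn1 ltnS.
Qed.

Lemma add_partK i q : (q i < N)%N -> remove_part i (add_part i q) = q.
Proof.
by move=> qi; apply/ffunP => t; apply/val_inj; rewrite /= remove_partE add_partE ?addnK.
Qed.

Lemma remove_partK i p : (0 < p i)%N -> add_part i (remove_part i p) = p.
Proof.
move=> pi; have pi' : (remove_part i p i < N)%N.
  by rewrite remove_partE eqxx subn1 -ltnS prednK.
apply/ffunP => t; apply/val_inj; rewrite /= add_partE // remove_partE.
by have [->|_] := eqVneq t i; rewrite ?subn0 ?addn0 // subn1 addn1 prednK.
Qed.

Lemma remove_part_neq i p t : t != i -> remove_part i p t = p t :> nat.
Proof. by move=> /negbTE ti; rewrite remove_partE ti subn0. Qed.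

Lemma nparts_remove_part i p : (0 < p i)%N -> nparts (remove_part i p) = (nparts p).-1.
Proof.
move=> pi; rewrite /nparts (bigD1 i) //= [in RHS](bigD1 i) //= remove_partE eqxx.
by under eq_bigr => t ti do rewrite remove_part_neq //; lia.
Qed.

Lemma prod_fact_remove_part i p : (0 < p i)%N ->
  (\prod_(t < N) (p t)`!)%N = (p i * \prod_(t < N) (remove_part i p t)`!)%N.
Proof.
move=> pi; rewrite (bigD1 i) //= [in RHS](bigD1 i) //= remove_partE eqxx subn1.
under [in RHS]eq_bigr => t ti do rewrite remove_part_neq //.
by rewrite -{1}(prednK pi) factS prednK // mulnA.
Qed.

Lemma prod_s_remove_part i p : (0 < p i)%N ->
  \prod_(t < N) s t.+1 ^+ p t = s i.+1 * \prod_(t < N) s t.+1 ^+ remove_part i p t.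
Proof.
move=> pi; rewrite (bigD1 i) //= [in RHS](bigD1 i) //= remove_partE eqxx subn1.
under [in RHS]eq_bigr => t ti do rewrite remove_part_neq //.
by rewrite mulrA -exprS prednK.
Qed.

Lemma prod_fact_neq0 p : (\prod_(t < N) (p t)`!)%:R != 0 :> R.
Proof. by rewrite pnatr_eq0 -lt0n prodn_gt0 // => t; apply: fact_gt0. Qed.

Lemma alpha_term_split p : (0 < nparts p)%N ->
  alpha_term p = - \sum_(i | (0 < p i)%N) s i.+1 * alpha_term (remove_part i p).
Proof.
move=> J_gt0; set J := nparts p in J_gt0 *; set P := \prod_(t < N) s t.+1 ^+ p t.
pose K := (-1) ^+ J * (J.-1`!)%:R / (\prod_(t < N) (p t)`!)%:R * P.
have part i : (0 < p i)%N -> - (s i.+1 * alpha_term (remove_part i p)) = (p i)%:R * K.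
  move=> pi; have sgn : (-1) ^+ J = - (-1) ^+ J.-1 :> R.
    by rewrite -{1}(prednK J_gt0) exprS mulN1r.
  rewrite /alpha_term /K /P nparts_remove_part // (prod_fact_remove_part pi).
  rewrite (prod_s_remove_part pi) -/J sgn natrM.
  have pi0 : (p i)%:R != 0 :> R by rewrite pnatr_eq0 -lt0n.
  by move: (prod_fact_neq0 (remove_part i p)) => fact0; field; rewrite pi0 fact0.
rewrite -sumrN (eq_bigr _ part) big_rmcond => [|i]; last first.
  by rewrite lt0n negbK => /eqP ->; rewrite mul0r.
rewrite -mulr_suml -natr_sum -/(nparts p) -/J /alpha_term /K -/J -/P.
rewrite -[in J`!](prednK J_gt0) factS prednK // natrM.
by move: (prod_fact_neq0 p) => fact0; field.
Qed.

Lemma partition_part_le m p i : partitions m p -> (i.+1 * p i <= m)%N.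
Proof. by move=> /eqP <-; rewrite (bigD1 i) //= leq_addr. Qed.

Lemma nparts_gt0 m p : (0 < m)%N -> partitions m p -> (0 < nparts p)%N.
Proof.
move=> m_gt0 /eqP pm; rewrite lt0n; apply: contraTneq m_gt0 => /eqP.
rewrite sum_nat_eq0 -pm -leqNgt leqn0 sum_nat_eq0 => /forallP p0.
by apply/forallP => t; rewrite (eqP (p0 t)) muln0.
Qed.

Lemma partitions_add_part m i q : (q i < N)%N -> (i < m)%N ->
  partitions m (add_part i q) = partitions (m - i.+1)%N q.
Proof.
move=> qi im; have delta : (\sum_(t < N) t.+1 * (t == i))%N = i.+1.
  by rewrite (bigD1 i) //= eqxx muln1 big1 ?addn0 // => t /negbTE ->; rewrite muln0.
rewrite /partitions; under eq_bigr => t _ do rewrite add_partE // mulnDr.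
by rewrite big_split /= delta; apply/eqP/eqP; lia.
Qed.

Lemma sum_partitions_remove_part (F : {ffun 'I_N -> 'I_N.+1} -> R) m i : (m <= N)%N ->
  \sum_(p | partitions m p && (0 < p i)%N) F (remove_part i p)
  = if (i < m)%N then \sum_(q | partitions (m - i.+1)%N q) F q else 0.
Proof.
move=> mN; have [im|mi] := ltnP i m; last first.
  apply: big1 => p /andP [/(partition_part_le i) pm pi].
  by have := leq_trans (leq_pmulr _ pi) (leq_trans pm mi); rewrite ltnn.
rewrite (reindex_onto (add_part i) (remove_part i)) => [|p /andP [_ pi]]; last first.
  exact: remove_partK.
apply: eq_big => [q|q /andP [_ /eqP ->] //].
have [qi|Nqi] := ltnP (q i) N.
  rewrite add_partK // eqxx add_partE // eqxx addn1 ltn0Sn.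
  by rewrite partitions_add_part // !andbT.
(* [add_part] wraps a full part [q i = N] around to [0]; such a [q] is not a
   partition of [m - i.+1 < N] anyway. *)
have wrap : add_part i q i = 0%N :> nat.
  by rewrite ffunE /inord val_insubd eqxx addn1 ltnS ltnNge Nqi.
rewrite wrap andbF /=; apply/esym/negP => /(partition_part_le i) qm.
have qi_le := leq_pmull (q i) (ltn0Sn i).
by move: (leq_trans (leq_trans Nqi qi_le) qm); lia.
Qed.

Lemma alpha_sum_rec m : (0 < m <= N)%N ->
  alpha_sum m = - \sum_(i < m) s i.+1 * alpha_sum (m - i.+1)%N.
Proof.
case/andP=> m_gt0 mN; rewrite {1}/alpha_sum.
under eq_bigr => p pm do rewrite alpha_term_split ?(nparts_gt0 m_gt0 pm) //.
rewrite sumrN (exchange_big_dep predT) //=; congr (- _).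
under eq_bigr => i _ do rewrite -mulr_sumr sum_partitions_remove_part //.
rewrite [RHS](big_ord_widen N (fun i : nat => s i.+1 * alpha_sum (m - i.+1)%N)) //.
rewrite [RHS]big_mkcond /=.
by apply: eq_bigr => i _; case: ifP; rewrite ?mulr0.
Qed.

Lemma alpha_sum0 : alpha_sum 0 = 1.
Proof.
rewrite /alpha_sum (big_pred1 [ffun => ord0]) => [|p]; last first.
  rewrite /partitions sum_nat_eq0; apply/forallP/eqP => [p0|-> t]; last first.
    by rewrite ffunE muln0.
  apply/ffunP => t; apply/val_inj; rewrite ffunE /=.
  by move: (p0 t); rewrite muln_eq0 => /eqP.
rewrite /alpha_term /nparts !big1 ?expr0 ?divr1 ?mulr1 // => t _; rewrite ffunE //.
Qed.

End BoundedParts.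

Lemma alpha_sum_stable N N' m : (m <= N)%N -> (m <= N')%N -> alpha_sum N m = alpha_sum N' m.
Proof.
elim/ltn_ind: m => m IH mN mN'; have [->|m_gt0] := posnP m; first by rewrite !alpha_sum0.
rewrite !alpha_sum_rec ?m_gt0 //; congr (- _); apply: eq_bigr => i _.
by rewrite (IH _ _ (leq_trans (leq_subr _ _) mN) (leq_trans (leq_subr _ _) mN')) //; lia.
Qed.

End PartitionSums.

Section LaplacianPowers.
Variables (R : realFieldType) (n : nat) (W : 'M[R]_n).
Hypothesis W_ge0 : forall i j, 0 <= W i j.

Lemma mulNlaplacian p (A : 'M[R]_(n, p)) i j :
  ((- laplacian W) *m A) i j = \sum_l W i l * (A l j - A i j).
Proof.
rewrite mxE (bigD1 i) //= [RHS](bigD1 i) //= subrr mulr0 add0r !mxE eqxx.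
under eq_bigr => l li do rewrite !mxE eq_sym (negbTE li) opprK.
under [RHS]eq_bigr do rewrite mulrBr.
by rewrite sumrB -mulr_suml mulNr addrC.
Qed.

Lemma Qmx_entry k i j :
  Qmx W k i j = \sum_(F | kforest W k F) sweight W F * (rooted_at F i j)%:R.
Proof.
rewrite mxE big_mkcond [RHS]big_mkcond; apply: eq_bigr => F _.
by rewrite /kforest; case: in_forest; case: eqP; case: rooted_at; rewrite ?mulr1 ?mulr0.
Qed.

Lemma Qmx_succ k : Qmx W k.+1 = sigma W k.+1 *: 1%:M + (- laplacian W) *m Qmx W k.
Proof.
apply/matrixP => i j.
have scalar : (sigma W k.+1 *: 1%:M : 'M[R]_n) i j = sigma W k.+1 * (i == j)%:R.
  by rewrite !mxE.
have sumQ : \sum_l W i l * (Qmx W k l j - Qmx W k i j) = \sum_(F | kforest W k F)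
    sweight W F * \sum_l W i l * ((rooted_at F l j)%:R - (rooted_at F i j)%:R).
  under eq_bigr do rewrite !Qmx_entry -sumrB mulr_sumr.
  rewrite exchange_big /=; apply: eq_bigr => F _; rewrite mulr_sumr.
  by apply: eq_bigr => l _; rewrite -mulrBr mulrCA.
rewrite [RHS]mxE scalar mulNlaplacian sumQ -kforest_recurrence // Qmx_entry.
under [X in _ = _ + X]eq_bigr do rewrite mulrBr.
by rewrite sumrB -mulr_suml addrC subrK.
Qed.

Lemma Qmx0 : Qmx W 0 = 1%:M.
Proof.
apply/matrixP => i j; rewrite Qmx_entry mxE (big_pred1 set0) => [|F]; last first.
  rewrite /kforest cards_eq0; apply/andP/eqP => [[_ /eqP //]|->].
  by rewrite forest0 eqxx.
by rewrite /sweight big_set0 mul1r (rooted_at_root j (forest0 W) (outdeg_set0 i)) eq_sym.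
Qed.

Lemma alpha_sumE N m : (m <= N)%N -> alpha_sum (sigma W) N m = alpha W m.
Proof. by case: m => [|m] mN; [rewrite alpha_sum0 | apply: alpha_sum_stable]. Qed.

Lemma alpha_convolution m :
  \sum_(k < m.+1) alpha W k * sigma W (m - k).+1 = - alpha W m.+1.
Proof.
change (alpha W m.+1) with (alpha_sum (sigma W) m.+1 m.+1).
rewrite alpha_sum_rec ?leqnn // opprK (reindex_inj rev_ord_inj).
apply: eq_bigr => k _; have -> : rev_ord k = (m - k)%N :> nat by rewrite /= subSS.
rewrite subKn; last by rewrite -ltnS.
by rewrite mulrC subSS alpha_sumE // leqW // leq_subr.
Qed.

End LaplacianPowers.

Theorem proposition8 (R : realFieldType) (n : nat) (W : 'M[R]_n)
  (hn : (1 < n)%N)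
  (hW0 : forall i j : 'I_n, 0 <= W i j)
  (hloop : forall i : 'I_n, W i i = 0) :
  forall m : nat,
    mxpow (- laplacian W) m
    = \sum_(k < m.+1) alpha W k *: Qmx W (m - k)%N.
Proof.
elim=> [|m IH]; first by rewrite big_ord1 Qmx0 (_ : alpha W 0 = 1) ?scale1r.
have mulNLQ k : (- laplacian W) *m Qmx W k = Qmx W k.+1 - sigma W k.+1 *: 1%:M.
  by rewrite (Qmx_succ hW0) addrC addKr.
change (mxpow _ m.+1) with ((- laplacian W) *m mxpow (- laplacian W) m).
rewrite IH mulmx_sumr.
under eq_bigr do rewrite -scalemxAr mulNLQ scalerBr scalerA.
rewrite sumrB -scaler_suml alpha_convolution scaleNr opprK.
rewrite [RHS]big_ord_recr /= subnn Qmx0; congr (_ + _).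
by apply: eq_bigr => k _; rewrite subSn // -ltnS.
Qed.
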